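(* (i) $(\mathfrak{D},\cdot)$ is a group. (ii) The multiplication $\mathfrak{D}\times\mathfrak{D}\to\mathfrak{D}$, $(A,B)\mapsto A\cdot B$, is continuous in the Fréchet topology of $\mathfrak{D}$. (iii) The inversion $\mathfrak{D}\to\mathfrak{D}$, $A\mapsto A^{-1}$, is continuous in the Fréchet topology of $\mathfrak{D}$.
   Context: $\mathfrak{D}$ is the set of linear maps $T=\sum_{\alpha\in\mathbb{N}_0^n}q_\alpha\partial^\alpha$ on $\mathbb{R}[x_1,\dots,x_n]$ with $q_\alpha\in\mathbb{R}[x_1,\dots,x_n]_{\le|\alpha|}$ (degree $\le|\alpha|$) for all $\alpha$ and $\ker T=\{0\}$; the product is composition. Its Fréchet topology is that of coordinate-wise convergence of the coefficients $c_{\alpha,\beta}$ in $q_\alpha=\sum_{|\beta|\le|\alpha|}c_{\alpha,\beta}x^\beta$. *)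

From HB Require Import structures.
From mathcomp Require Import all_boot all_order all_algebra.
From mathcomp Require Import mpoly.
From mathcomp Require Import all_classical all_reals all_analysis.

Set Implicit Arguments.
Unset Strict Implicit.
Unset Printing Implicit Defensive.

Import Order.TTheory GRing.Theory Num.Theory.
Import numFieldNormedType.Exports.
Local Open Scope ring_scope.
Local Open Scope classical_set_scope.

(* A differential operator T = \sum_alpha q_alpha \partial^alpha on R[x_1..x_n]
   is encoded by its coefficient family c, with
     q_alpha = \sum_{|beta| <= |alpha|} c (alpha, beta) x^beta. *)
Notation coefs n R := {ptws ('X_{1..n} * 'X_{1..n}) -> R}.

Section DiffOps.
Variables (R : realType) (n : nat).

Definition Dqcoef (c : coefs n R) (a : 'X_{1..n}) : {mpoly R[n]} :=
  \sum_(b : 'X_{1..n < (mdeg a).+1}) c (a, bmnm b) *: 'X_[bmnm b].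

(* action of T on a polynomial p; the terms with |alpha| >= msize p vanish,
   since then \partial^alpha p = 0, so this is the full (formally infinite) sum. *)
Definition Dop (c : coefs n R) (p : {mpoly R[n]}) : {mpoly R[n]} :=
  \sum_(a : 'X_{1..n < msize p}) Dqcoef c a * p^`M[bmnm a].

(* degree condition: c(alpha,beta) = 0 whenever |beta| > |alpha|
   (so deg q_alpha <= |alpha| and the family c is exactly the coefficients) *)
Definition Ddeg_ok (c : coefs n R) : Prop :=
  forall a b : 'X_{1..n}, (mdeg a < mdeg b)%N -> c (a, b) = 0.

Definition frakD : set (coefs n R) :=
  [set c | Ddeg_ok c /\ (forall p, Dop c p = 0 -> p = 0)].

Definition Dmul (c d : coefs n R) : coefs n R :=
  @xget ('X_{1..n} * 'X_{1..n} -> R) (fun _ => 0) [set e : coefs n R | Ddeg_ok e /\ (forall p, Dop e p = Dop c (Dop d p))].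

Definition Dunit : coefs n R :=
  fun ab => if (ab.1 == 0%MM) && (ab.2 == 0%MM) then 1 else 0.

Definition Dinv (c : coefs n R) : coefs n R :=
  @xget ('X_{1..n} * 'X_{1..n} -> R) (fun _ => 0) [set e : coefs n R | Ddeg_ok e /\
        (forall p, Dop e (Dop c p) = p) /\ (forall p, Dop c (Dop e p) = p)].

End DiffOps.

Arguments frakD R n : clear implicits.
Arguments Dunit R n : clear implicits.

From HB Require Import structures.
From mathcomp Require Import all_boot all_order all_algebra.
From mathcomp Require Import mpoly ssrcomplements.
From mathcomp Require Import all_classical all_reals all_analysis.

Import Order.TTheory GRing.Theory Num.Theory.
Import numFieldNormedType.Exports.
Local Open Scope ring_scope.
Local Open Scope classical_set_scope.

(* An operator of D is determined by its values on monomials: since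
   d^a x^a = a! and d^a' x^a = 0 for every other a' with |a'| >= |a|, the
   coefficients are recovered by the recursion
     q_a = (a!)^-1 (T x^a - \sum_(|a'| < |a|) q_a' d^a' x^a),
   and every linear map L with deg (L p) <= deg p arises in this way from a
   unique coefficient family of the right degrees.  This gives closure under
   composition.  On polynomials of degree < N an operator of D acts by an
   injective, hence invertible, square matrix, so it is bijective and its
   inverse is again such a map.  Finally, every coefficient of A.B is a
   polynomial in the coefficients of A and B, and by Cramer's rule every
   coefficient of A^-1 is a rational function of those of A whose denominator
   does not vanish on D. *)

Definition continuous_within_at {R : realType} {T : topologicalType}
  (A : set T) (x0 : T) (f : T -> R) := f x @[x --> within A (nbhs x0)] --> f x0.

Section ContinuousWithinAt.
Context {R : realType} {T : topologicalType} {A : set T} {x0 : T}.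
Local Notation cwa := (continuous_within_at A x0).
Implicit Types f g : T -> R.

Lemma eq_continuous_within_at {f} g : f =1 g -> cwa f -> cwa g.
Proof. by move=> /funext->. Qed.

Lemma eq_in_continuous_within_at f {g} : A x0 -> {in A, f =1 g} -> cwa g -> cwa f.
Proof.
move=> Ax0 fg; rewrite /continuous_within_at fg ?inE //.
by apply: cvg_trans; exact: fmap_within_eq.
Qed.

Lemma continuous_within_atW {f} : {for x0, continuous f} -> cwa f.
Proof. by move=> cf; apply: cvg_trans cf; apply: cvg_fmap2; exact: cvg_within. Qed.

Lemma continuous_within_at_cst (k : R) : cwa (fun=> k).
Proof. exact: cvg_cst. Qed.

Lemma continuous_within_atN {f} : cwa f -> cwa (fun x => - f x).
Proof. exact: cvgN. Qed.

Lemma continuous_within_atD {f g} : cwa f -> cwa g -> cwa (fun x => f x + g x).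
Proof. exact: cvgD. Qed.

Lemma continuous_within_atM {f g} : cwa f -> cwa g -> cwa (fun x => f x * g x).
Proof. exact: cvgM. Qed.

Lemma continuous_within_atV {f} : f x0 != 0 -> cwa f -> cwa (fun x => (f x)^-1).
Proof. exact: cvgV. Qed.

Lemma continuous_within_at_sum {I : Type} {r : seq I} {P : pred I} {F : I -> T -> R} :
  (forall i, P i -> cwa (F i)) -> cwa (fun x => \sum_(i <- r | P i) F i x).
Proof. by move=> cF; apply: cvg_big => //; exact: add_continuous. Qed.

Lemma continuous_within_at_prod {I : Type} {r : seq I} {P : pred I} {F : I -> T -> R} :
  (forall i, P i -> cwa (F i)) -> cwa (fun x => \prod_(i <- r | P i) F i x).
Proof. by move=> cF; apply: cvg_big => //; exact: mul_continuous. Qed.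

Lemma continuous_within_at_mulmx {k l m} {F : T -> 'M[R]_(k, l)} {G : T -> 'M[R]_(l, m)} :
  (forall i j, cwa (fun x => F x i j)) -> (forall i j, cwa (fun x => G x i j)) ->
  forall i j, cwa (fun x => (F x *m G x) i j).
Proof.
move=> cF cG i j; apply: (eq_continuous_within_at (f := fun x => \sum_h F x i h * G x h j)).
  by move=> x; rewrite mxE.
by apply: continuous_within_at_sum => h _; exact: continuous_within_atM.
Qed.

Lemma continuous_within_at_det {k} {G : T -> 'M[R]_k} :
  (forall i j, cwa (fun x => G x i j)) -> cwa (fun x => \det (G x)).
Proof.
move=> cG; apply: continuous_within_at_sum => s _.
apply: continuous_within_atM; first exact: continuous_within_at_cst.
by apply: continuous_within_at_prod => i _; exact: cG.
Qed.

Lemma continuous_within_at_adj {k} {G : T -> 'M[R]_k} :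
  (forall i j, cwa (fun x => G x i j)) -> forall i j, cwa (fun x => \adj (G x) i j).
Proof.
move=> cG i j; apply: (@eq_continuous_within_at (fun x => cofactor (G x) j i)).
  by move=> x; rewrite mxE.
apply: continuous_within_atM; first exact: continuous_within_at_cst.
apply: continuous_within_at_det => i' j'.
by apply: (@eq_continuous_within_at (fun x => G x (lift j i') (lift i j'))) => [x|];
  rewrite ?mxE.
Qed.

Lemma continuous_within_at_invmx {k} {G : T -> 'M[R]_k} :
  A x0 -> (forall x, A x -> G x \in unitmx) ->
  (forall i j, cwa (fun x => G x i j)) -> forall i j, cwa (fun x => invmx (G x) i j).
Proof.
move=> Ax0 GA cG i j.
apply: (@eq_in_continuous_within_at _ (fun x => (\det (G x))^-1 * \adj (G x) i j)) => //.
  by move=> x /set_mem Ax; rewrite /invmx GA // mxE.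
apply: continuous_within_atM; last exact: continuous_within_at_adj.
apply: continuous_within_atV; last exact: continuous_within_at_det.
by rewrite -unitfE -unitmxE GA.
Qed.

End ContinuousWithinAt.

Lemma cvg_ptws {U : topologicalType} {I : Type} {F : set_system {ptws I -> U}}
    {FF : Filter F} {f : {ptws I -> U}} :
  (forall i, (fun g : {ptws I -> U} => g i) @ F --> f i) -> F --> f.
Proof.
move=> cvgF; apply/cvg_sup => i B /=.
rewrite (@nbhsE (initial_topology (fun g : {ptws I -> U} => g i))).
move=> [_ [[C oC <-] Cf] CB]; apply: (filterS CB); apply: (cvgF i).
by apply: open_nbhs_nbhs; split.
Qed.

Lemma continuous_within_ptws {R : realType} {T : topologicalType} {I : Type}
    {A : set T} {f : T -> {ptws I -> R}} :
  (forall y, A y -> forall i, continuous_within_at A y (fun x => f x i)) ->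
  {within A, continuous f}.
Proof.
move=> cf; apply/subspace_continuousP => y Ay.
by apply: (@cvg_ptws _ _ (f @ within A (nbhs y))) => // i; exact: cf.
Qed.

Set Implicit Arguments.
Unset Strict Implicit.
Unset Printing Implicit Defensive.

Section Multinomials.
Variables (R : realType) (n : nat).
Local Notation M := 'X_{1..n}.
Local Notation P := {mpoly R[n]}.
Implicit Types (p : P) (a m : M).

Lemma mcoeff_eq0_msize p m : (msize p <= mdeg m)%N -> p@_m = 0.
Proof. by move=> /msize_mdeg_ge /memN_msupp_eq0. Qed.

Lemma mderivm_eq0 a p : (msize p <= mdeg a)%N -> p^`M[a] = 0.
Proof.
move=> pa; apply/mpolyP => m; rewrite mcoeff_mderivm mcoeff0 mcoeff_eq0_msize ?mul0rn //.
by rewrite mdegD (leq_trans pa) ?leq_addr.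
Qed.

Lemma mpolyX_neq0 m : 'X_[m] != 0 :> P.
Proof. by rewrite -msize_poly_eq0 msizeX. Qed.

Lemma big_mdeg_restrict (V : zmodType) k K (F : M -> V) : (k <= K)%N ->
  \sum_(a : 'X_{1..n < K} | (mdeg a < k)%N) F a = \sum_(a : 'X_{1..n < k}) F a.
Proof.
move=> kK; rewrite (@big_sub_widen _ _ _ _ (fun m : M => (mdeg m < k)%N)
  (fun m : M => (mdeg m < K)%N) 'X_{1..n < k} 'X_{1..n < K} xpredT) //.
by move=> m /leq_trans; exact.
Qed.

Lemma big_mdeg_widen (V : zmodType) k K (F : M -> V) : (k <= K)%N ->
  (forall a, (k <= mdeg a)%N -> F a = 0) ->
  \sum_(a : 'X_{1..n < K}) F a = \sum_(a : 'X_{1..n < k}) F a.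
Proof.
move=> kK F0; symmetry; apply: (@eq_big_widen _ _ _ _ (fun m : M => (mdeg m < k)%N)
  (fun m : M => (mdeg m < K)%N) 'X_{1..n < k} 'X_{1..n < K} xpredT) => [m|m].
  by move=> /leq_trans; exact.
by rewrite -leqNgt => /F0.
Qed.

Definition mfact a : R := (\prod_(i < n) (a i)`!)%:R.

Lemma mfact_neq0 a : mfact a != 0.
Proof. by rewrite pnatr_eq0 -lt0n prodn_gt0 // => i; exact: fact_gt0. Qed.

Lemma mderivmXm a : ('X_[a])^`M[a] = mfact a *: 1 :> P.
Proof.
rewrite mderivmX (_ : (a - a)%MM = 0%MM) ?mpolyX0; last first.
  by apply/mnmP => i; rewrite mnmBE subnn mnm0E.
by congr (_%:R *: _); apply: eq_bigr => i _; rewrite ffactnn.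
Qed.

Lemma mderivmX_eq0 a a' : ~~ (a' <= a)%MM -> ('X_[a])^`M[a'] = 0 :> P.
Proof.
move=> a'a; rewrite mderivmX.
have [i lt_ai] : exists i, (a i < a' i)%N.
  apply/existsP; apply: contraR a'a => /existsPn lea; apply/mnm_lepP => i.
  by rewrite leqNgt lea.
by rewrite (bigD1 i) //= ffact_small // mul0n scale0r.
Qed.

Lemma lem_mdeg_eq a a' : (a' <= a)%MM -> mdeg a' = mdeg a -> a' = a.
Proof.
move=> le_a'a eq_deg; have a_eq := submK le_a'a.
have /eqP : mdeg (a - a')%MM = 0%N.
  by apply/eqP; rewrite -(eqn_add2r (mdeg a')) -mdegD a_eq eq_deg.
by rewrite mdeg_eq0 => /eqP d0; rewrite -a_eq d0 add0m.
Qed.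

Lemma linear_mpolyE (L : P -> P) : linear L ->
  forall p, L p = \sum_(m <- msupp p) p@_m *: L 'X_[m].
Proof.
move=> L_lin p.
have LD u v : L (u + v) = L u + L v by rewrite -[u]scale1r L_lin !scale1r.
have L0 : L 0 = 0 by apply: (@addrI _ (L 0)); rewrite -LD !addr0.
rewrite {1}[p]mpolyE (big_morph L LD L0); apply: eq_bigr => m _.
by rewrite -[_ *: _]addr0 L_lin L0 addr0.
Qed.

Lemma eq_linear_mpoly (L1 L2 : P -> P) : linear L1 -> linear L2 ->
  (forall m, L1 'X_[m] = L2 'X_[m]) -> L1 =1 L2.
Proof.
move=> L1_lin L2_lin eqX p; rewrite (linear_mpolyE L1_lin) (linear_mpolyE L2_lin).
by apply: eq_bigr => m _; rewrite eqX.
Qed.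

End Multinomials.

Arguments mfact {R n} a.

Section PolynomialCoefficients.
Variables (R : realType) (n : nat).
Local Notation M := 'X_{1..n}.
Local Notation P := {mpoly R[n]}.
Implicit Types (p r : P) (q : M -> P) (L : M -> P) (a m : M).

Definition dop q p : P := \sum_(a : 'X_{1..n < msize p}) q a * p^`M[a].

Lemma dop_widen q p K : (msize p <= K)%N ->
  dop q p = \sum_(a : 'X_{1..n < K}) q a * p^`M[a].
Proof.
move=> pK; rewrite /dop (big_mdeg_widen (F := fun a => q a * p^`M[a]) pK) //.
by move=> a /mderivm_eq0 ->; rewrite mulr0.
Qed.

Lemma dop_linear q : linear (dop q).
Proof.
move=> k p1 p2; set K := maxn (msize p1) (msize p2).
have p1K : (msize p1 <= K)%N by rewrite leq_maxl.
have p2K : (msize p2 <= K)%N by rewrite leq_maxr.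
have pK : (msize (k *: p1 + p2) <= K)%N.
  by rewrite (leq_trans (msizeD_le _ _)) // geq_max p2K (leq_trans (msizeZ_le _ _)).
rewrite (dop_widen _ p1K) (dop_widen _ p2K) (dop_widen _ pK) scaler_sumr -big_split /=.
by apply: eq_bigr => a _; rewrite mderivmD mderivmZ mulrDr scalerAr.
Qed.

Definition deg_bounded q := forall a, (msize (q a) <= (mdeg a).+1)%N.

Lemma msize_mul_mderivmX r a a' : (msize r <= (mdeg a').+1)%N ->
  (msize (r * ('X_[a])^`M[a']) <= (mdeg a).+1)%N.
Proof.
move=> r_a'; have [le_a'a|] := boolP (a' <= a)%MM; last first.
  by move=> /mderivmX_eq0->; rewrite mulr0 msize0.
have [->|r0] := eqVneq r 0; first by rewrite mul0r msize0.
rewrite mderivmX -scalerAr (leq_trans (msizeZ_le _ _)) // msizeM ?mpolyX_neq0 //.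
have -> : mdeg a = (mdeg (a - a')%MM + mdeg a')%N by rewrite -mdegD submK.
by rewrite msizeX addnS /= addnC -addnS leq_add2l.
Qed.

Lemma msize_dopX q m : deg_bounded q -> (msize (dop q 'X_[m]) <= (mdeg m).+1)%N.
Proof.
move=> qb; rewrite /dop msizeX (leq_trans (msize_sum _ _ _)) //.
by apply/bigmax_leqP => a _; exact: msize_mul_mderivmX.
Qed.

Lemma msize_dop q p : deg_bounded q -> (msize (dop q p) <= msize p)%N.
Proof.
move=> qb; rewrite (linear_mpolyE (dop_linear q)) (leq_trans (msize_sum _ _ _)) //.
apply/bigmax_leqP_seq => m mp _; rewrite (leq_trans (msizeZ_le _ _)) //.
by rewrite (leq_trans (msize_dopX m qb)) // msize_mdeg_lt.
Qed.

Lemma dopX q a : dop q 'X_[a] =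
  \sum_(a' : 'X_{1..n < mdeg a}) q a' * ('X_[a])^`M[a'] + mfact a *: q a.
Proof.
rewrite /dop msizeX (bigID (fun a' : 'X_{1..n < (mdeg a).+1} => (mdeg a' < mdeg a)%N)) /=.
congr (_ + _); first exact: (big_mdeg_restrict (fun a' => q a' * ('X_[a])^`M[a'])).
have lt_a : (mdeg a < (mdeg a).+1)%N by [].
rewrite (bigD1 (BMultinom lt_a)) /= ?ltnn // mderivmXm -scalerAr mulr1 big1 ?addr0 //.
move=> a' /andP[ge_a' ne_a'].
have eq_deg : mdeg a' = mdeg a by apply/eqP; rewrite eqn_leq -ltnS bmdeg leqNgt.
have [le_a'a|] := boolP (a' <= a)%MM; last by move=> /mderivmX_eq0->; rewrite mulr0.
by case/eqP: ne_a'; apply/val_inj; rewrite /= (lem_mdeg_eq le_a'a eq_deg).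
Qed.

(* Solving [dopX] for [q a]; the fuel [N] only has to exceed [|a|]. *)
Fixpoint dop_coef_rec L N a : P :=
  if N is N'.+1 then
    if mdeg a == N' then
      (mfact a)^-1 *: (L a - \sum_(a' : 'X_{1..n < N'}) dop_coef_rec L N' a' * ('X_[a])^`M[a'])
    else dop_coef_rec L N' a
  else 0.

Definition dop_coef L a := dop_coef_rec L (mdeg a).+1 a.

Lemma dop_coef_recE L N a : (mdeg a < N)%N -> dop_coef_rec L N a = dop_coef L a.
Proof.
elim: N => // N IH lt_aN /=; case: eqP => [<-|ne_aN]; first by rewrite /dop_coef /= eqxx.
by rewrite IH // ltn_neqAle -ltnS lt_aN andbT; apply/eqP.
Qed.

Lemma dop_coefE L a : dop_coef L a = (mfact a)^-1 *:
  (L a - \sum_(a' : 'X_{1..n < mdeg a}) dop_coef L a' * ('X_[a])^`M[a']).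
Proof.
rewrite {1}/dop_coef /= eqxx; congr (_ *: (_ - _)); apply: eq_bigr => a' _.
by rewrite dop_coef_recE // bmdeg.
Qed.

Lemma dop_coefK q a : dop_coef (fun m => dop q 'X_[m]) a = q a.
Proof.
suff rec N : forall a, (mdeg a < N)%N -> dop_coef (fun m => dop q 'X_[m]) a = q a.
  exact: rec.
elim: N => // N IH {}a lt_aN; rewrite dop_coefE dopX.
under [X in _ - X]eq_bigr => a' _ do rewrite IH ?(leq_trans (bmdeg a')) //.
by rewrite addrC addKr scalerA mulVf ?mfact_neq0 ?scale1r.
Qed.

Lemma dop_dop_coef L a : dop (dop_coef L) 'X_[a] = L a.
Proof.
rewrite dopX [X in _ + _ *: X]dop_coefE scalerA mulfV ?mfact_neq0 // scale1r.
by rewrite addrC subrK.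
Qed.

Lemma dop_coef_bounded L : (forall m, (msize (L m) <= (mdeg m).+1)%N) ->
  deg_bounded (dop_coef L).
Proof.
move=> Lb a; suff rec N : forall a, (mdeg a < N)%N -> (msize (dop_coef L a) <= (mdeg a).+1)%N.
  exact: rec.
elim: N => // N IH {}a lt_aN.
rewrite dop_coefE (leq_trans (msizeZ_le _ _)) // (leq_trans (msizeD_le _ _)) //.
rewrite geq_max Lb msizeN (leq_trans (msize_sum _ _ _)) //.
apply/bigmax_leqP => a' _; apply: msize_mul_mderivmX; apply: IH.
by rewrite (leq_trans (bmdeg a')).
Qed.

End PolynomialCoefficients.

Section CoefficientFamilies.
Variables (R : realType) (n : nat).
Local Notation M := 'X_{1..n}.
Local Notation P := {mpoly R[n]}.
Implicit Types (c d : coefs n R) (p : P) (q : M -> P) (a b m : M).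

Definition coefs_of q : coefs n R := fun ab => (q ab.1)@_ab.2.

Lemma Ddeg_ok_coefs_of q : deg_bounded q -> Ddeg_ok (coefs_of q).
Proof.
move=> qb a b lt_ab; apply: mcoeff_eq0_msize.
exact: leq_trans (qb a) lt_ab.
Qed.

Lemma mcoeff_Dqcoef c a b :
  (Dqcoef c a)@_b = if (mdeg b < (mdeg a).+1)%N then c (a, b) else 0.
Proof.
rewrite /Dqcoef raddf_sum /=; case: ifPn => [lt_ba|ge_ba].
  rewrite (bigD1 (BMultinom lt_ba)) //= mcoeffZ mcoeffX eqxx mulr1 big1 ?addr0 //.
  move=> b' ne_b'; rewrite mcoeffZ mcoeffX.
  by case: eqP => [eq_b'|]; rewrite ?mulr0 //; case/eqP: ne_b'; apply/val_inj.
rewrite big1 // => b' _; rewrite mcoeffZ mcoeffX.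
by case: eqP => [eq_b'|]; rewrite ?mulr0 //; case/negP: ge_ba; rewrite -eq_b' bmdeg.
Qed.

Lemma Dqcoef_bounded c : deg_bounded (Dqcoef c).
Proof.
move=> a; rewrite (leq_trans (msize_sum _ _ _)) //; apply/bigmax_leqP => b _.
by rewrite (leq_trans (msizeZ_le _ _)) // msizeX bmdeg.
Qed.

Lemma Dqcoef_coefs_of q : deg_bounded q -> Dqcoef (coefs_of q) =1 q.
Proof. by move=> qb a; rewrite [RHS](mpolywE (qb a)). Qed.

Lemma coefs_of_Dqcoef c : Ddeg_ok c -> coefs_of (Dqcoef c) = c.
Proof.
move=> c_ok; apply/funext => -[a b]; rewrite /coefs_of /= mcoeff_Dqcoef.
by case: ifPn => // /negbTE; rewrite ltnS => /negbT; rewrite -ltnNge => /c_ok ->.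
Qed.

HB.instance Definition _ c :=
  GRing.isLinear.Build R P P *:%R (Dop c) (dop_linear (Dqcoef c)).

Lemma Dop_coefs_of q : deg_bounded q -> Dop (coefs_of q) =1 dop q.
Proof. by move=> qb p; apply: eq_bigr => a _; rewrite Dqcoef_coefs_of. Qed.

Lemma msize_Dop c p : (msize (Dop c p) <= msize p)%N.
Proof. exact/msize_dop/Dqcoef_bounded. Qed.

Lemma Dop_widen c p K : (msize p <= K)%N ->
  Dop c p = \sum_(a : 'X_{1..n < K}) Dqcoef c a * p^`M[a].
Proof. exact: dop_widen. Qed.

Lemma Dop_coefs_inj c d : Ddeg_ok c -> Ddeg_ok d ->
  (forall m, Dop c 'X_[m] = Dop d 'X_[m]) -> c = d.
Proof.
move=> c_ok d_ok eqX; rewrite -(coefs_of_Dqcoef c_ok) -(coefs_of_Dqcoef d_ok).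
congr coefs_of; apply/funext => a.
by rewrite -[LHS]dop_coefK -[RHS]dop_coefK; congr dop_coef; apply/funext.
Qed.

Definition coefs_of_linear (L : P -> P) := coefs_of (dop_coef (fun m => L 'X_[m])).

Section CoefsOfLinear.
Variable L : P -> P.
Hypotheses (L_linear : linear L) (msize_L : forall p, (msize (L p) <= msize p)%N).

Let L_bounded : deg_bounded (dop_coef (fun m => L 'X_[m])).
Proof. by apply: dop_coef_bounded => m; rewrite -(msizeX R) msize_L. Qed.

Lemma Ddeg_ok_coefs_of_linear : Ddeg_ok (coefs_of_linear L).
Proof. exact: Ddeg_ok_coefs_of L_bounded. Qed.

Lemma Dop_coefs_of_linear : Dop (coefs_of_linear L) =1 L.
Proof.
move=> p; rewrite (Dop_coefs_of L_bounded); apply: eq_linear_mpoly => // [|m].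
  exact: dop_linear.
exact: dop_dop_coef.
Qed.

End CoefsOfLinear.

Lemma linear_Dop_comp c d : linear (Dop c \o Dop d).
Proof. by move=> k p r; rewrite /= !linearP. Qed.

Lemma msize_Dop_comp c d p : (msize ((Dop c \o Dop d) p) <= msize p)%N.
Proof. exact/(leq_trans (msize_Dop _ _))/msize_Dop. Qed.

Lemma Dmul_spec c d :
  Ddeg_ok (Dmul c d) /\ forall p, Dop (Dmul c d) p = Dop c (Dop d p).
Proof.
apply: (@xgetPex _ (fun=> 0) [set e | Ddeg_ok e /\ forall p, Dop e p = Dop c (Dop d p)]).
exists (coefs_of_linear (Dop c \o Dop d)).
split; first exact/Ddeg_ok_coefs_of_linear/msize_Dop_comp.
exact/Dop_coefs_of_linear/msize_Dop_comp/linear_Dop_comp.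
Qed.

Lemma Dmul_unique c d e : Ddeg_ok e ->
  (forall p, Dop e p = Dop c (Dop d p)) -> Dmul c d = e.
Proof.
have [cd_ok DopM] := Dmul_spec c d.
by move=> e_ok DopE; apply: Dop_coefs_inj => // m; rewrite DopM DopE.
Qed.

Lemma DmulE c d : Dmul c d = coefs_of_linear (Dop c \o Dop d).
Proof.
apply: Dmul_unique; first exact/Ddeg_ok_coefs_of_linear/msize_Dop_comp.
exact/Dop_coefs_of_linear/msize_Dop_comp/linear_Dop_comp.
Qed.

Definition Dunit_coef a : P := if a == 0%MM then 1 else 0.

Lemma Dunit_coef_bounded : deg_bounded Dunit_coef.
Proof. by move=> a; rewrite /Dunit_coef; case: ifP; rewrite ?msize1 ?msize0. Qed.

Lemma Dunit_coefs_of : Dunit R n = coefs_of Dunit_coef.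
Proof.
apply/funext => -[a b]; rewrite /Dunit /coefs_of /Dunit_coef /=.
by case: (a == 0%MM); rewrite ?mcoeff1 ?mcoeff0 //=; case: (b == 0%MM).
Qed.

Lemma Ddeg_ok_Dunit : Ddeg_ok (Dunit R n).
Proof. by rewrite Dunit_coefs_of; exact/Ddeg_ok_coefs_of/Dunit_coef_bounded. Qed.

Lemma Dop_Dunit p : Dop (Dunit R n) p = p.
Proof.
have [->|p0] := eqVneq p 0; first exact: linear0.
have deg0 : (mdeg (0%MM : M) < msize p)%N by rewrite mdeg0 lt0n msize_poly_eq0.
rewrite Dunit_coefs_of (Dop_coefs_of Dunit_coef_bounded) /dop.
rewrite (bigD1 (BMultinom deg0)) //= /Dunit_coef eqxx mul1r mderivm0m big1 ?addr0 //.
move=> a ne_a0; rewrite ifF ?mul0r //.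
by apply: contraNF ne_a0 => /eqP a0; apply/eqP/val_inj; exact: a0.
Qed.

Lemma Dmul_frakD c d : frakD R n c -> frakD R n d -> frakD R n (Dmul c d).
Proof.
move=> [_ c_inj] [_ d_inj]; have [cd_ok DopM] := Dmul_spec c d.
by split=> // p; rewrite DopM => /c_inj/d_inj.
Qed.

Lemma DmulA c d e : Dmul (Dmul c d) e = Dmul c (Dmul d e).
Proof.
have [cde_ok DopM_cde] := Dmul_spec c (Dmul d e).
apply: Dmul_unique => // p; rewrite DopM_cde.
by rewrite (Dmul_spec d e).2 (Dmul_spec c d).2.
Qed.

Lemma Dunit_frakD : frakD R n (Dunit R n).
Proof. by split=> [|p]; [exact: Ddeg_ok_Dunit | rewrite Dop_Dunit]. Qed.

Lemma Dmul1c c : Ddeg_ok c -> Dmul (Dunit R n) c = c.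
Proof. by move=> c_ok; apply: Dmul_unique => // p; rewrite Dop_Dunit. Qed.

Lemma Dmulc1 c : Ddeg_ok c -> Dmul c (Dunit R n) = c.
Proof. by move=> c_ok; apply: Dmul_unique => // p; rewrite Dop_Dunit. Qed.

End CoefficientFamilies.

Section Inverse.
Variables (R : realType) (n : nat).
Local Notation M := 'X_{1..n}.
Local Notation P := {mpoly R[n]}.
Implicit Types (c : coefs n R) (p r : P) (m : M).

Section Truncation.
Variable N : nat.
Local Notation k := #|{: 'X_{1..n < N}}|.

Definition enum_mnm (i : 'I_k) : M := val (enum_val i).

Lemma enum_mnm_inj : injective enum_mnm.
Proof. by move=> i j /val_inj /enum_val_inj. Qed.

Definition Dop_mx c : 'M[R]_k := \matrix_(i, j) (Dop c 'X_[enum_mnm i])@_(enum_mnm j).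

Definition row_mpoly (v : 'rV[R]_k) : P := \sum_i v 0 i *: 'X_[enum_mnm i].

Definition mpoly_row p : 'rV[R]_k := \row_j p@_(enum_mnm j).

Lemma mcoeff_row_mpoly v m : (row_mpoly v)@_m = \sum_i v 0 i * (enum_mnm i == m)%:R.
Proof. by rewrite /row_mpoly raddf_sum /=; apply: eq_bigr => i _; rewrite mcoeffZ mcoeffX. Qed.

Lemma mcoeff_row_mpoly_enum v j : (row_mpoly v)@_(enum_mnm j) = v 0 j.
Proof.
rewrite mcoeff_row_mpoly (bigD1 j) //= eqxx mulr1 big1 ?addr0 // => i ne_ij.
by rewrite (inj_eq enum_mnm_inj) (negbTE ne_ij) mulr0.
Qed.

Lemma msize_row_mpoly v : (msize (row_mpoly v) <= N)%N.
Proof.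
rewrite (leq_trans (msize_sum _ _ _)) //; apply/bigmax_leqP => i _.
by rewrite (leq_trans (msizeZ_le _ _)) // msizeX bmdeg.
Qed.

Lemma mcoeff_Dop_row_mpoly c v j : (Dop c (row_mpoly v))@_(enum_mnm j) = (v *m Dop_mx c) 0 j.
Proof.
rewrite /row_mpoly (linear_sum (Dop c)) raddf_sum mxE /=; apply: eq_bigr => i _.
by rewrite linearZ mcoeffZ mxE.
Qed.

Lemma eq_mpoly_enum p r : (msize p <= N)%N -> (msize r <= N)%N ->
  (forall j, p@_(enum_mnm j) = r@_(enum_mnm j)) -> p = r.
Proof.
move=> pN rN eq_pr; apply/mpolyP => m.
have [lt_mN|ge_mN] := ltnP (mdeg m) N; last first.
  by rewrite !mcoeff_eq0_msize // (leq_trans _ ge_mN).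
by have := eq_pr (enum_rank (BMultinom lt_mN)); rewrite /enum_mnm enum_rankK.
Qed.

Lemma Dop_mx_unit c : frakD R n c -> Dop_mx c \in unitmx.
Proof.
move=> [_ c_inj]; rewrite unitmxE unitfE; apply/negP => /det0P[v v0 vc0].
have /c_inj v_row0 : Dop c (row_mpoly v) = 0.
  apply: eq_mpoly_enum; rewrite ?msize0 ?(leq_trans (msize_Dop _ _) (msize_row_mpoly _)) //.
  by move=> j; rewrite mcoeff_Dop_row_mpoly vc0 mxE mcoeff0.
by case/eqP: v0; apply/rowP => j; rewrite -mcoeff_row_mpoly_enum v_row0 mcoeff0 mxE.
Qed.

Lemma Dop_row_mpoly_invmx c p : frakD R n c -> (msize p <= N)%N ->
  Dop c (row_mpoly (mpoly_row p *m invmx (Dop_mx c))) = p.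
Proof.
move=> cD pN; apply: eq_mpoly_enum => //.
  exact: leq_trans (msize_Dop _ _) (msize_row_mpoly _).
by move=> j; rewrite mcoeff_Dop_row_mpoly mulmxKV ?Dop_mx_unit // mxE.
Qed.

End Truncation.

Lemma Dop_inj c : frakD R n c -> injective (Dop c).
Proof.
move=> [_ c_inj] p r eq_pr; apply/eqP; rewrite -subr_eq0; apply/eqP/c_inj.
by rewrite (linearB (Dop c)) /= eq_pr subrr.
Qed.

Definition Dop_preim c p : P := xget 0 [set r | Dop c r = p].

Lemma Dop_preimK c : frakD R n c -> cancel (Dop_preim c) (Dop c).
Proof.
move=> cD p; apply: (@xgetPex _ 0 [set r | Dop c r = p]).
by exists (row_mpoly (mpoly_row (msize p) p *m invmx (Dop_mx (msize p) c))); exact: Dop_row_mpoly_invmx.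
Qed.

Lemma DopK c : frakD R n c -> cancel (Dop c) (Dop_preim c).
Proof. by move=> cD p; apply: (Dop_inj cD); rewrite (Dop_preimK cD). Qed.

Lemma Dop_preimE N c p : frakD R n c -> (msize p <= N)%N ->
  Dop_preim c p = row_mpoly (mpoly_row N p *m invmx (Dop_mx N c)).
Proof. by move=> cD pN; rewrite -{1}(Dop_row_mpoly_invmx cD pN) DopK. Qed.

Lemma msize_Dop_preim c : frakD R n c -> forall p, (msize (Dop_preim c p) <= msize p)%N.
Proof. by move=> cD p; rewrite (Dop_preimE cD (leqnn _)) msize_row_mpoly. Qed.

Lemma linear_Dop_preim c : frakD R n c -> linear (Dop_preim c).
Proof. by move=> cD k p r; apply: (Dop_inj cD); rewrite (linearP (Dop c)) /= !(Dop_preimK cD). Qed.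

Lemma Dinv_spec c : frakD R n c -> Ddeg_ok (Dinv c) /\
  (forall p, Dop (Dinv c) (Dop c p) = p) /\ (forall p, Dop c (Dop (Dinv c) p) = p).
Proof.
move=> cD; apply: (@xgetPex _ (fun=> 0) [set e | Ddeg_ok e /\
  (forall p, Dop e (Dop c p) = p) /\ (forall p, Dop c (Dop e p) = p)]).
have DopV := Dop_coefs_of_linear (linear_Dop_preim cD) (msize_Dop_preim cD).
exists (coefs_of_linear (Dop_preim c)); split.
  exact/Ddeg_ok_coefs_of_linear/msize_Dop_preim.
by split=> p; rewrite DopV ?DopK ?Dop_preimK.
Qed.

Lemma DinvE c : frakD R n c -> Dinv c = coefs_of_linear (Dop_preim c).
Proof.
move=> cD; have [cV_ok [DopVK _]] := Dinv_spec cD.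
apply: Dop_coefs_inj => [||m]; first exact: cV_ok.
  exact/Ddeg_ok_coefs_of_linear/msize_Dop_preim.
by rewrite (Dop_coefs_of_linear (linear_Dop_preim cD) (msize_Dop_preim cD)) -{1}(Dop_preimK cD 'X_[m]) DopVK.
Qed.

Lemma Dinv_frakD c : frakD R n c -> frakD R n (Dinv c).
Proof.
move=> cD; have [cV_ok [_ DopKV]] := Dinv_spec cD.
by split=> // p /(congr1 (Dop c)); rewrite DopKV linear0.
Qed.

Lemma DmulVc c : frakD R n c -> Dmul (Dinv c) c = Dunit R n.
Proof.
move=> cD; have [_ [DopVK _]] := Dinv_spec cD.
by apply: Dmul_unique => [|p]; [exact: Ddeg_ok_Dunit | rewrite Dop_Dunit DopVK].
Qed.

Lemma DmulcV c : frakD R n c -> Dmul c (Dinv c) = Dunit R n.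
Proof.
move=> cD; have [_ [_ DopKV]] := Dinv_spec cD.
by apply: Dmul_unique => [|p]; [exact: Ddeg_ok_Dunit | rewrite Dop_Dunit DopKV].
Qed.

End Inverse.

Section MpolyContinuousWithinAt.
Variables (R : realType) (n : nat) (T : topologicalType) (A : set T) (x0 : T).
Local Notation M := 'X_{1..n}.
Local Notation P := {mpoly R[n]}.
Local Notation cwa := (continuous_within_at A x0).
Implicit Types (F G : T -> P).

Definition mpoly_continuous_within_at G := forall m, cwa (fun x => (G x)@_m).
Local Notation mcwa := mpoly_continuous_within_at.

Lemma eq_in_mpoly_continuous_within_at F G : A x0 -> {in A, F =1 G} -> mcwa G -> mcwa F.
Proof.
by move=> Ax0 FG cG m; apply: (eq_in_continuous_within_at _ Ax0 _ (cG m)) => x /FG ->.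
Qed.

Lemma mpoly_continuous_within_at_cst p : mcwa (fun=> p).
Proof. by move=> m; exact: continuous_within_at_cst. Qed.

Lemma mpoly_continuous_within_atN G : mcwa G -> mcwa (fun x => - G x).
Proof.
by move=> cG m; under eq_fun do rewrite mcoeffN; exact: continuous_within_atN.
Qed.

Lemma mpoly_continuous_within_atD F G : mcwa F -> mcwa G -> mcwa (fun x => F x + G x).
Proof.
by move=> cF cG m; under eq_fun do rewrite mcoeffD; exact: continuous_within_atD.
Qed.

Lemma mpoly_continuous_within_atZ (s : T -> R) G :
  cwa s -> mcwa G -> mcwa (fun x => s x *: G x).
Proof.
by move=> cs cG m; under eq_fun do rewrite mcoeffZ; exact: continuous_within_atM.
Qed.

Lemma mpoly_continuous_within_atM F G : mcwa F -> mcwa G -> mcwa (fun x => F x * G x).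
Proof.
move=> cF cG m; under eq_fun do rewrite mcoeffM.
by apply: continuous_within_at_sum => k _; exact: continuous_within_atM.
Qed.

Lemma mpoly_continuous_within_at_sum (I : Type) (r : seq I) (Q : pred I) (F : I -> T -> P) :
  (forall i, Q i -> mcwa (F i)) -> mcwa (fun x => \sum_(i <- r | Q i) F i x).
Proof.
move=> cF m; under eq_fun do rewrite raddf_sum.
by apply: continuous_within_at_sum => i Qi; exact: cF.
Qed.

Lemma mpoly_continuous_within_at_mderivm a G : mcwa G -> mcwa (fun x => (G x)^`M[a]).
Proof.
move=> cG m; under eq_fun do rewrite mcoeff_mderivm -mulr_natr.
exact: continuous_within_atM (cG _) (continuous_within_at_cst _).
Qed.

Lemma mpoly_continuous_within_at_row_mpoly N (V : T -> 'rV[R]_#|{: 'X_{1..n < N}}|) :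
  (forall j, cwa (fun x => V x 0 j)) -> mcwa (fun x => row_mpoly (V x)).
Proof.
move=> cV; apply: mpoly_continuous_within_at_sum => j _.
exact/mpoly_continuous_within_atZ/mpoly_continuous_within_at_cst.
Qed.

Lemma mpoly_continuous_within_at_dop_coef (L : T -> M -> P) :
  (forall m, mcwa (fun x => L x m)) -> forall a, mcwa (fun x => dop_coef (L x) a).
Proof.
move=> cL a; suff rec N : mcwa (fun x => dop_coef_rec (L x) N a) by exact: rec.
elim: N a => [|N IH] a /=; first exact: mpoly_continuous_within_at_cst.
case: (mdeg a == N); last exact: IH.
apply: mpoly_continuous_within_atZ; first exact: continuous_within_at_cst.
apply: mpoly_continuous_within_atD; first exact: cL.
apply/mpoly_continuous_within_atN/mpoly_continuous_within_at_sum => a' _.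
exact/mpoly_continuous_within_atM/mpoly_continuous_within_at_cst.
Qed.

Lemma mpoly_continuous_within_at_Dqcoef (C : T -> coefs n R) a :
  (forall ab, cwa (fun x => C x ab)) -> mcwa (fun x => Dqcoef (C x) a).
Proof.
move=> cC; apply: mpoly_continuous_within_at_sum => b _.
exact/mpoly_continuous_within_atZ/mpoly_continuous_within_at_cst.
Qed.

Lemma mpoly_continuous_within_at_Dop (C : T -> coefs n R) p :
  (forall ab, cwa (fun x => C x ab)) -> mcwa (fun x => Dop (C x) p).
Proof.
move=> cC; apply: mpoly_continuous_within_at_sum => a _.
apply: mpoly_continuous_within_atM; last exact: mpoly_continuous_within_at_cst.
exact: mpoly_continuous_within_at_Dqcoef.
Qed.

(* For fixed [m] the inner polynomial has degree at most [|m|] whatever [x] is,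
   so the outer operator is a sum over a fixed range. *)
Lemma mpoly_continuous_within_at_Dop_comp (C D : T -> coefs n R) m :
  (forall ab, cwa (fun x => C x ab)) -> (forall ab, cwa (fun x => D x ab)) ->
  mcwa (fun x => Dop (C x) (Dop (D x) 'X_[m])).
Proof.
move=> cC cD m'; under eq_fun do rewrite (Dop_widen _ (msize_Dop _ _)) msizeX.
apply: mpoly_continuous_within_at_sum => a _.
apply: mpoly_continuous_within_atM; first exact: mpoly_continuous_within_at_Dqcoef.
exact/mpoly_continuous_within_at_mderivm/mpoly_continuous_within_at_Dop.
Qed.

End MpolyContinuousWithinAt.

Section Continuity.
Variables (R : realType) (n : nat).

Lemma Dmul_continuous : {within frakD R n `*` frakD R n,
  continuous (fun cd : coefs n R * coefs n R => Dmul cd.1 cd.2)}.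
Proof.
apply: continuous_within_ptws => y _ [a b].
have c1 ab : continuous_within_at (frakD R n `*` frakD R n) y (fun cd => cd.1 ab).
  apply/continuous_within_atW/(@continuous_comp _ _ _ fst (fun c : coefs n R => c ab)).
    exact: cvg_fst.
  exact: proj_continuous.
have c2 ab : continuous_within_at (frakD R n `*` frakD R n) y (fun cd => cd.2 ab).
  apply/continuous_within_atW/(@continuous_comp _ _ _ snd (fun c : coefs n R => c ab)).
    exact: cvg_snd.
  exact: proj_continuous.
apply: (eq_continuous_within_at
  (f := fun cd => (dop_coef (fun m => Dop cd.1 (Dop cd.2 'X_[m])) a)@_b)).
  by move=> cd; rewrite DmulE.
apply: mpoly_continuous_within_at_dop_coef => m.
exact: mpoly_continuous_within_at_Dop_comp.
Qed.

Lemma Dinv_continuous : {within frakD R n, continuous (fun c : coefs n R => Dinv c)}.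
Proof.
apply: continuous_within_ptws => y Dy [a b].
have cC ab : continuous_within_at (frakD R n) y (fun c : coefs n R => c ab).
  exact/continuous_within_atW/proj_continuous.
apply: (eq_in_continuous_within_at _
  (g := fun c => (dop_coef (fun m => Dop_preim c 'X_[m]) a)@_b)) => // [c /set_mem cD|].
  by rewrite DinvE.
apply: mpoly_continuous_within_at_dop_coef => m; set N := (mdeg m).+1.
apply: (eq_in_mpoly_continuous_within_at
  (G := fun c => row_mpoly (mpoly_row N 'X_[m] *m invmx (Dop_mx N c)))) => // [c /set_mem cD|].
  by rewrite (Dop_preimE (N := N) cD) // msizeX.
apply: mpoly_continuous_within_at_row_mpoly; apply: continuous_within_at_mulmx => i j.
  exact: continuous_within_at_cst.
apply: continuous_within_at_invmx => // [c /Dop_mx_unit //|{}i {}j].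
apply: (eq_continuous_within_at (f := fun c => (Dop c 'X_[enum_mnm i])@_(enum_mnm j))).
  by move=> c; rewrite mxE.
exact: mpoly_continuous_within_at_Dop.
Qed.

End Continuity.

Theorem lemma3p2 (R : realType) (n : nat) :
  (* (i) (frakD, .) is a group *)
  ((forall c d, frakD R n c -> frakD R n d -> frakD R n (Dmul c d)) /\
   (forall c d e, frakD R n c -> frakD R n d -> frakD R n e ->
      Dmul (Dmul c d) e = Dmul c (Dmul d e)) /\
   frakD R n (Dunit R n) /\
   (forall c, frakD R n c -> Dmul (Dunit R n) c = c /\ Dmul c (Dunit R n) = c) /\
   (forall c, frakD R n c ->
      frakD R n (Dinv c) /\ Dmul (Dinv c) c = Dunit R n /\ Dmul c (Dinv c) = Dunit R n)) /\
  (* (ii) multiplication is continuous *)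
  {within frakD R n `*` frakD R n,
     continuous (fun cd : coefs n R * coefs n R => Dmul cd.1 cd.2)} /\
  (* (iii) inversion is continuous *)
  {within frakD R n, continuous (fun c : coefs n R => Dinv c)}.
Proof.
split; last by split; [exact: Dmul_continuous | exact: Dinv_continuous].
split; first exact: Dmul_frakD.
split; first by move=> c d e *; exact: DmulA.
split; first exact: Dunit_frakD.
split; first by move=> c [c_ok _]; split; [exact: Dmul1c | exact: Dmulc1].
by move=> c cD; split; [exact: Dinv_frakD | split; [exact: DmulVc | exact: DmulcV]].
Qed.
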